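(* Let $p\in\mathbb{R}^d$, $\epsilon>0$, and $\psi:\mathbb{R}^d\to[0,1]$ be such that every oriented hyperplane $H$ with $B(p,\epsilon)\subseteq H^+$ is a reflecting hyperplane for $\psi$. Then for all $x,y\in\mathbb{R}^d$ with $\|x-p\|-\|y-p\|>2\epsilon$, we have $\psi(x)\le\psi(y)$.
   Context: $B(p,\epsilon)$ is the open Euclidean ball. An oriented hyperplane is $H=\{x:\langle x,u\rangle=a\}$ with $u$ a unit vector, $a\in\mathbb{R}$; $H^-=\{\langle x,u\rangle<a\}$, $H^+=\{\langle x,u\rangle>a\}$, and $x^H=x-2(\langle x,u\rangle-a)u$. $H$ is a reflecting hyperplane for $\psi$ if $\psi(x)\le\psi(x^H)$ for all $x\in H^-$. *)

From mathcomp Require Import all_boot all_order all_algebra.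
Set Implicit Arguments. Unset Strict Implicit. Unset Printing Implicit Defensive.
Import Order.TTheory GRing.Theory Num.Theory.
Local Open Scope ring_scope.

Section Euclid.
Variables (R : rcfType) (d : nat).
Implicit Types (x y u p : 'rV[R]_d) (a eps : R).

Definition dotv x y : R := \sum_(i < d) x 0 i * y 0 i.
Definition enorm x : R := Num.sqrt (dotv x x).
Definition oball p eps : pred 'rV[R]_d := fun x => enorm (x - p) < eps.

(* oriented hyperplane H = {<x,u> = a}, with u a unit vector *)
Definition Hminus u a : pred 'rV[R]_d := fun x => dotv x u < a.
Definition Hplus u a : pred 'rV[R]_d := fun x => a < dotv x u.
Definition hrefl u a x : 'rV[R]_d := x - (2 * (dotv x u - a)) *: u.

Definition reflecting (psi : 'rV[R]_d -> R) u a : Prop :=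
  forall x, x \in Hminus u a -> psi x <= psi (hrefl u a x).
End Euclid.

From mathcomp Require Import all_boot all_order all_algebra.
From mathcomp Require Import ring lra.
Set Implicit Arguments. Unset Strict Implicit. Unset Printing Implicit Defensive.
Import Order.TTheory GRing.Theory Num.Theory.
Local Open Scope ring_scope.

(* Reflect x through the perpendicular bisector H of the segment [x, y]:
   x lies in H^- and x^H = y.  If |x - p| - |y - p| > 2 eps, then p lies at
   distance at least eps on the positive side of H, because
   2 <p - m, y - x> = |x - p|^2 - |y - p|^2 >= 2 eps (|x - p| + |y - p|)
   >= 2 eps |y - x|  for the midpoint m of [x, y].  So H is a reflecting
   hyperplane for psi, and psi x <= psi (x^H) = psi y. *)

Lemma quadratic_ge0_discr (R : realFieldType) (A B C : R) :
  0 <= C -> (forall t, 0 <= A + 2 * t * B + t ^+ 2 * C) -> B ^+ 2 <= A * C.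
Proof.
move=> C_ge0 quad_ge0; have [C_gt0 | C_le0] := ltP 0 C.
  have := quad_ge0 (- B / C).
  have -> : A + 2 * (- B / C) * B + (- B / C) ^+ 2 * C = (A * C - B ^+ 2) / C.
    by field; rewrite gt_eqF.
  by rewrite pmulr_lge0 ?invr_gt0 // subr_ge0.
have C_eq0 : C = 0 by apply/eqP; rewrite eq_le C_le0 C_ge0.
rewrite C_eq0 mulr0; have [-> | B_neq0] := eqVneq B 0; first by rewrite expr0n.
have := quad_ge0 (- (A + 1) / (2 * B)); rewrite C_eq0 mulr0 addr0.
have -> : A + 2 * (- (A + 1) / (2 * B)) * B = -1.
  by field; rewrite B_neq0.
by rewrite ler0N1.
Qed.

Section EuclideanSpace.
Variables (R : rcfType) (d : nat).
Implicit Types (x y z p u v : 'rV[R]_d) (a eps : R).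

Lemma dotvC x y : dotv x y = dotv y x.
Proof. by apply: eq_bigr => i _; rewrite mulrC. Qed.

Lemma dotvDl x y z : dotv (x + y) z = dotv x z + dotv y z.
Proof. by rewrite /dotv -big_split; apply: eq_bigr => i _; rewrite mxE mulrDl. Qed.

Lemma dotvZl a x z : dotv (a *: x) z = a * dotv x z.
Proof. by rewrite /dotv mulr_sumr; apply: eq_bigr => i _; rewrite mxE mulrA. Qed.

Lemma dotvNl x z : dotv (- x) z = - dotv x z.
Proof. by rewrite -scaleN1r dotvZl mulN1r. Qed.

Lemma dotvBl x y z : dotv (x - y) z = dotv x z - dotv y z.
Proof. by rewrite dotvDl dotvNl. Qed.

Lemma dotvDr x y z : dotv z (x + y) = dotv z x + dotv z y.
Proof. by rewrite dotvC dotvDl !(dotvC z). Qed.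

Lemma dotvZr a x z : dotv z (a *: x) = a * dotv z x.
Proof. by rewrite dotvC dotvZl dotvC. Qed.

Lemma dotvBr x y z : dotv z (x - y) = dotv z x - dotv z y.
Proof. by rewrite dotvC dotvBl !(dotvC z). Qed.

Lemma subr_dotvv x y : dotv x x - dotv y y = dotv (x - y) (x + y).
Proof. by rewrite dotvBl !dotvDr (dotvC y x); ring. Qed.

Lemma dotvv_ge0 x : 0 <= dotv x x.
Proof. by apply: sumr_ge0 => i _; rewrite -expr2 sqr_ge0. Qed.

Lemma enorm_ge0 x : 0 <= enorm x.
Proof. exact: sqrtr_ge0. Qed.

Lemma enorm_sqr x : enorm x ^+ 2 = dotv x x.
Proof. by rewrite sqr_sqrtr // dotvv_ge0. Qed.

Lemma enormZ a x : enorm (a *: x) = `|a| * enorm x.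
Proof. by rewrite /enorm dotvZl dotvZr mulrA -expr2 sqrtrM ?sqr_ge0 // sqrtr_sqr. Qed.

Lemma enormN x : enorm (- x) = enorm x.
Proof. by rewrite -scaleN1r enormZ normrN1 mul1r. Qed.

Lemma enorm_distC x y : enorm (x - y) = enorm (y - x).
Proof. by rewrite -enormN opprB. Qed.

Lemma dotv_le_enorm x y : dotv x y <= enorm x * enorm y.
Proof.
have cauchy_schwarz : dotv x y ^+ 2 <= dotv x x * dotv y y.
  apply: quadratic_ge0_discr => [|t]; first exact: dotvv_ge0.
  have := dotvv_ge0 (x + t *: y).
  by rewrite !(dotvDl, dotvDr, dotvZl, dotvZr) (dotvC y x); congr (_ <= _); ring.
rewrite (le_trans (ler_norm _)) // -sqrtr_sqr -sqrtrM ?dotvv_ge0 //.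
by rewrite ler_sqrt // mulr_ge0 ?dotvv_ge0.
Qed.

Lemma enormD x y : enorm (x + y) <= enorm x + enorm y.
Proof.
rewrite -[leRHS]ger0_norm ?addr_ge0 ?enorm_ge0 // -sqrtr_sqr.
rewrite ler_sqrt ?sqr_ge0 // !(dotvDl, dotvDr) (dotvC y x) -!enorm_sqr.
have := dotv_le_enorm x y; lra.
Qed.

Lemma oball_dotv_gt p eps u z :
  enorm u = 1 -> z \in oball p eps -> dotv p u - eps < dotv z u.
Proof.
rewrite unfold_in /oball => u_unit z_near.
have := dotv_le_enorm (p - z) u; rewrite dotvBl u_unit mulr1.
rewrite (enorm_distC p z); lra.
Qed.

Definition bisector_normal x y : 'rV[R]_d := (enorm (y - x))^-1 *: (y - x).

Definition bisector_offset x y : R :=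
  (dotv x (bisector_normal x y) + dotv y (bisector_normal x y)) / 2.

Section Bisector.
Variables x y : 'rV[R]_d.

Local Notation u := (bisector_normal x y).
Local Notation a := (bisector_offset x y).

Lemma dotv_bisector_normal v : dotv v u = dotv v (y - x) / enorm (y - x).
Proof. by rewrite dotvZr mulrC. Qed.

Lemma enorm_bisector_normal : 0 < enorm (y - x) -> enorm u = 1.
Proof. by move=> xy_gt0; rewrite enormZ normfV gtr0_norm // mulVf ?gt_eqF. Qed.

Lemma dotv_sub_bisector_normal :
  0 < enorm (y - x) -> dotv y u - dotv x u = enorm (y - x).
Proof.
move=> xy_gt0; rewrite -dotvBl dotv_bisector_normal -enorm_sqr expr2.
by rewrite -mulrA mulfV ?gt_eqF // mulr1.
Qed.

Lemma bisector_Hminus : 0 < enorm (y - x) -> x \in Hminus u a.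
Proof.
move=> xy_gt0; rewrite unfold_in /Hminus /bisector_offset.
have := dotv_sub_bisector_normal xy_gt0; lra.
Qed.

Lemma hrefl_bisector : 0 < enorm (y - x) -> hrefl u a x = y.
Proof.
move=> xy_gt0; rewrite /hrefl; have -> : 2 * (dotv x u - a) = - enorm (y - x).
  by rewrite /bisector_offset -(dotv_sub_bisector_normal xy_gt0); field.
by rewrite scaleNr opprK scalerA mulfV ?gt_eqF // scale1r addrC subrK.
Qed.

Lemma oball_sub_bisector_Hplus p eps :
  0 < enorm (y - x) -> 0 <= eps -> 2 * eps <= enorm (x - p) - enorm (y - p) ->
  {subset oball p eps <= Hplus u a}.
Proof.
move=> xy_gt0 eps_ge0 far z.
move=> /(oball_dotv_gt (enorm_bisector_normal xy_gt0)) z_far.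
rewrite unfold_in /Hplus; apply: le_lt_trans z_far; rewrite lerBrDr.
rewrite /bisector_offset !dotv_bisector_normal.
have xy_le : enorm (y - x) <= enorm (x - p) + enorm (y - p).
  have -> : y - x = (y - p) - (x - p) by rewrite opprB addrA subrK.
  by rewrite addrC -(enormN (x - p)); apply: enormD.
have power : dotv p (y - x) * 2 - dotv x (y - x) - dotv y (y - x)
             = enorm (x - p) ^+ 2 - enorm (y - p) ^+ 2.
  rewrite !enorm_sqr subr_dotvv !(dotvBl, dotvBr, dotvDr).
  by rewrite (dotvC x p) (dotvC y p) (dotvC y x); ring.
set w := y - x in xy_gt0 xy_le power *; set n := enorm w in xy_gt0 xy_le *.
have -> : (dotv x w / n + dotv y w / n) / 2 + eps
          = ((dotv x w + dotv y w) / 2 + eps * n) / n.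
  by field; rewrite gt_eqF.
rewrite ler_pM2r ?invr_gt0 //.
have := enorm_ge0 (x - p); have := enorm_ge0 (y - p); nra.
Qed.

End Bisector.
End EuclideanSpace.

Theorem lemma5 (R : rcfType) (d : nat) (p : 'rV[R]_d) (eps : R)
    (psi : 'rV[R]_d -> R) :
  0 < eps ->
  (forall x, 0 <= psi x <= 1) ->
  (forall (u : 'rV[R]_d) (a : R), enorm u = 1 ->
     {subset oball p eps <= Hplus u a} -> reflecting psi u a) ->
  forall x y : 'rV[R]_d, 2 * eps < enorm (x - p) - enorm (y - p) ->
    psi x <= psi y.
Proof.
move=> eps_gt0 _ reflect_psi x y far.
have xy_gt0 : 0 < enorm (y - x).
  have : enorm (x - p) <= enorm (x - y) + enorm (y - p).
    have -> : x - p = (x - y) + (y - p) by rewrite addrA subrK.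
    exact: enormD.
  by rewrite (enorm_distC x y); lra.
rewrite -(hrefl_bisector xy_gt0).
apply: reflect_psi (bisector_Hminus xy_gt0).
  exact: enorm_bisector_normal.
by apply: oball_sub_bisector_Hplus; rewrite ?ltW.
Qed.
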